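(* Let $S=\langle n_1,n_2\rangle$ be a numerical semigroup with $2\leq n_1<n_2$. Then $S$ is a MANS-semigroup if and only if there exists $a\in\mathbb{N}\setminus\{0\}$ such that $n_2=an_1+1$.
   Context: $\mathbb{N}=\{0,1,2,\ldots\}$. A numerical semigroup is a subset $S\subseteq\mathbb{N}$ closed under addition, containing $0$, with $\mathbb{N}\setminus S$ finite; $\langle A\rangle$ is the submonoid of $(\mathbb{N},+)$ generated by $A$. The multiplicity $\mathrm{m}(S)$ is the least element of $S\setminus\{0\}$. $S$ is a MANS-semigroup if $w(1)<w(2)<\cdots<w(\mathrm{m}(S)-1)$, where $w(i)$ is the least element of $S$ congruent to $i$ modulo $\mathrm{m}(S)$. *)

From mathcomp Require Import all_boot.
Set Implicit Arguments. Unset Strict Implicit. Unset Printing Implicit Defensive.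

Inductive gen_monoid (A : nat -> Prop) : nat -> Prop :=
  | gen_zero : gen_monoid A 0
  | gen_base x : A x -> gen_monoid A x
  | gen_add x y : gen_monoid A x -> gen_monoid A y -> gen_monoid A (x + y).

Definition numerical_semigroup (S : nat -> Prop) : Prop :=
  S 0 /\ (forall x y, S x -> S y -> S (x + y)) /\
  exists F, forall x, F < x -> S x.

Definition least_in (S : nat -> Prop) (P : nat -> Prop) (x : nat) : Prop :=
  S x /\ P x /\ forall y, S y -> P y -> x <= y.

Definition multiplicity (S : nat -> Prop) (m : nat) : Prop :=
  least_in S (fun x => 0 < x) m.

Definition apery_w (S : nat -> Prop) (m i w : nat) : Prop :=
  least_in S (fun x => x = i %[mod m]) w.

Definition MANS (S : nat -> Prop) : Prop :=
  forall m, multiplicity S m ->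
  forall i wi wi1, 1 <= i -> i.+1 <= m - 1 ->
    apery_w S m i wi -> apery_w S m i.+1 wi1 -> wi < wi1.

From mathcomp Require Import all_boot.
From mathcomp Require Import zify.
From Stdlib Require Import Classical.
From Stdlib Require Wf_nat.

Set Implicit Arguments.
Unset Strict Implicit.
Unset Printing Implicit Defensive.

(* Write n2 = a n1 + r with 0 <= r < n1; the multiplicity is n1.  Every element
   of <n1, n2> below n2 is a multiple of n1, so w(i) >= n2 for 0 < i < n1, while
   w(r) <= n2.  Finiteness of the complement forces r <> 0, and if r >= 2 then
   w(r - 1) >= n2 >= w(r) breaks the MANS condition.  Conversely, if r = 1 then
   p n1 + q n2 = i (mod n1) with i < n1 forces q >= i, so w(i) = i n2. *)

Lemma least_in_unique S P x y : least_in S P x -> least_in S P y -> x = y.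
Proof.
move=> [Sx [Px le_x]] [Sy [Py le_y]]; apply/eqP.
by rewrite eqn_leq le_x ?le_y.
Qed.

Lemma least_in_exists (S P : nat -> Prop) x :
  S x -> P x -> exists w, least_in S P w.
Proof.
move=> Sx Px.
have [w [[[Sw Pw] le_w] _]] :=
  @Wf_nat.dec_inh_nat_subset_has_unique_least_element (fun y => S y /\ P y)
    (fun y => classic _) (ex_intro _ x (conj Sx Px)).
by exists w; split; [|split] => // y Sy Py; apply/leP/le_w.
Qed.

Lemma apery_w_exists S m i :
  numerical_semigroup S -> 0 < m -> exists w, apery_w S m i w.
Proof.
move=> [_ [_ [F S_gtF]]] m_gt0.
apply: (@least_in_exists _ _ (F.+1 * m + i)); last exact: modnMDl.
by apply: S_gtF; nia.
Qed.

Section TwoGenerators.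
Variables n1 n2 : nat.
Local Notation S := (gen_monoid (fun x => x = n1 \/ x = n2)).

Lemma gen_monoid2P x : S x <-> exists p q, x = p * n1 + q * n2.
Proof.
split.
- elim=> [|y [->|->]|y z _ [p [q ->]] _ [p' [q' ->]]].
  + by exists 0, 0.
  + by exists 1, 0; lia.
  + by exists 0, 1; lia.
  + by exists (p + p'), (q + q'); lia.
- have S_mul k c : c = n1 \/ c = n2 -> S (k * c).
    move=> gen_c; elim: k => [|k IHk]; first exact: gen_zero.
    by rewrite mulSn; apply: gen_add => //; apply: gen_base.
  by move=> [p [q ->]]; apply: gen_add; apply: S_mul; auto.
Qed.

Lemma multiplicity_gen_monoid2 : 0 < n1 <= n2 -> multiplicity S n1.
Proof.
move=> /andP[n1_gt0 le_n12]; split; first by apply/gen_monoid2P; exists 1, 0; lia.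
split=> // y /gen_monoid2P[p [q ->]] y_gt0.
by case: p y_gt0 => [|p]; case: q => [|q]; nia.
Qed.

Lemma gen_monoid2_dvdn x : n1 %| n2 -> S x -> n1 %| x.
Proof.
by move=> n1_n2 /gen_monoid2P[p [q ->]]; rewrite dvdn_add ?dvdn_mull.
Qed.

Lemma gen_monoid2_lt_dvdn x : S x -> x < n2 -> n1 %| x.
Proof.
by move=> /gen_monoid2P[p [[|q] ->]] lt_x_n2; [rewrite addn0 dvdn_mull | nia].
Qed.

Lemma apery_w_gen_monoid2_ge i w :
  0 < i < n1 -> apery_w S n1 i w -> n2 <= w.
Proof.
move=> /andP[i_gt0 lt_i_n1] [Sw [w_mod _]]; rewrite leqNgt; apply/negP => lt_w_n2.
have := gen_monoid2_lt_dvdn Sw lt_w_n2.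
by rewrite /dvdn w_mod modn_small //; lia.
Qed.

Lemma apery_w_gen_monoid2 a i :
  n2 = a * n1 + 1 -> i < n1 -> apery_w S n1 i (i * n2).
Proof.
move=> def_n2 lt_i_n1; split; first by apply/gen_monoid2P; exists 0, i.
split; first by rewrite def_n2 mulnDr muln1 mulnA modnMDl.
move=> y /gen_monoid2P[p [q ->]].
have -> : p * n1 + q * n2 = (p + q * a) * n1 + q by rewrite def_n2; lia.
rewrite modnMDl (modn_small lt_i_n1) => def_i.
have le_i_q : i <= q by rewrite -def_i leq_mod.
nia.
Qed.

Lemma modn_gen_monoid2_gt0 :
  numerical_semigroup S -> 1 < n1 -> 0 < n2 %% n1.
Proof.
move=> numS n1_gt1; rewrite lt0n; apply/negP => n1_n2.
have [x [Sx [x_mod _]]] := apery_w_exists 1 numS (ltnW n1_gt1).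
by move: (gen_monoid2_dvdn n1_n2 Sx); rewrite /dvdn x_mod modn_small.
Qed.

Lemma MANS_gen_monoid2_modn_le1 :
  numerical_semigroup S -> 1 < n1 -> n1 < n2 -> MANS S -> n2 %% n1 <= 1.
Proof.
move=> numS n1_gt1 lt_n12 mansS; rewrite leqNgt; apply/negP => r_gt1.
have lt_r_n1 : n2 %% n1 < n1 by rewrite ltn_mod; lia.
have [w Hw] := apery_w_exists (n2 %% n1).-1 numS (ltnW n1_gt1).
have [w' Hw'] := apery_w_exists (n2 %% n1) numS (ltnW n1_gt1).
have multS : multiplicity S n1 by apply: multiplicity_gen_monoid2; lia.
have lt_w_w' : w < w'.
  by apply: (mansS n1 multS _ _ _ _ _ Hw); rewrite ?prednK //; lia.
have le_n2_w : n2 <= w by apply: (apery_w_gen_monoid2_ge _ Hw); lia.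
have le_w'_n2 : w' <= n2.
  by case: Hw' => _ [_]; apply; [apply: gen_base; right | rewrite modn_mod].
lia.
Qed.

End TwoGenerators.

Theorem proposition2p3 (n1 n2 : nat) :
  numerical_semigroup (gen_monoid (fun x => x = n1 \/ x = n2)) ->
  2 <= n1 -> n1 < n2 ->
  (MANS (gen_monoid (fun x => x = n1 \/ x = n2)) <->
   exists a, 0 < a /\ n2 = a * n1 + 1).
Proof.
move=> numS n1_gt1 lt_n12.
have multS : multiplicity (gen_monoid (fun x => x = n1 \/ x = n2)) n1.
  by apply: multiplicity_gen_monoid2; lia.
split=> [mansS | [a [_ def_n2]] m multS' i w w' i_gt0 lt_i Hw Hw'].
- have r_eq1 : n2 %% n1 = 1.
    have := modn_gen_monoid2_gt0 numS n1_gt1.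
    have := MANS_gen_monoid2_modn_le1 numS n1_gt1 lt_n12 mansS.
    lia.
  exists (n2 %/ n1); split; first by rewrite divn_gt0; lia.
  by rewrite {1}(divn_eq n2 n1) r_eq1.
- rewrite (least_in_unique multS' multS) in lt_i Hw Hw'.
  rewrite (least_in_unique Hw (apery_w_gen_monoid2 def_n2 _)); last lia.
  rewrite (least_in_unique Hw' (apery_w_gen_monoid2 def_n2 _)); last lia.
  by rewrite ltn_pmul2r; lia.
Qed.
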